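(* Let $f\in\mathscr{F}_r$ be normalized ($f(\emptyset)=0$) with $r$-decomposition $(V_i,f_i)_{i=1}^m$, and let $S\subseteq V$ be nonempty. Then the function $f^S:2^{V\setminus S}\to\mathbb{R}_+$ is nonnegative, monotone and supermodular. Moreover, it admits the $(r-1)$-decomposition $(V_i\setminus S,f_i^S)_{i\in I_S}$, i.e. $f^S(T)=\sum_{i\in I_S}f_i^S(T\cap(V_i\setminus S))$ for all $T\subseteq V\setminus S$ with $|V_i\setminus S|\le r-1$, where the functions $f_i^S$, $i\in I_S$, are nonnegative, monotone and supermodular.
   Context: $V$ is a finite set, $[m]=\{1,\dots,m\}$. Supermodular: $g(A)+g(B)\le g(A\cup B)+g(A\cap B)$; monotone: $g(B)\le g(A)$ for $B\subseteq A$. $\mathscr{F}_r$ is the family of nonnegative monotone supermodular $f:2^V\to\mathbb{R}_+$ admitting an $r$-decomposition $(V_i,f_i)_{i=1}^m$: subsets $V_i\subseteq V$ with $|V_i|\le r$ and nonnegative supermodular $f_i:2^{V_i}\to\mathbb{R}_+$ with $f(S)=\sum_i f_i(S\cap V_i)$ for all $S\subseteq V$. For nonempty $S\subseteq V$: $I_S=\{i\in[m]:V_i\cap S\ne\emptyset\}$; $f^S(T)=\sum_{i\in I_S}\big(f_i((S\cup T)\cap V_i)-f_i(S\cap V_i)\big)$ for $T\subseteq V\setminus S$; and for $i\in I_S$, $f_i^S:2^{V_i\setminus S}\to\mathbb{R}$, $f_i^S(T)=f_i((S\cup T)\cap V_i)-f_i(S\cap V_i)$. *)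

(* Set functions on a finite ground set V are modelled as
   total maps {set V} -> R; a function "on 2^D" is only constrained on
   subsets of D. *)
From mathcomp Require Import all_boot all_order all_algebra.
Set Implicit Arguments. Unset Strict Implicit. Unset Printing Implicit Defensive.
Import Order.TTheory GRing.Theory Num.Theory.
Local Open Scope ring_scope.

Section Defs.
Variables (R : realFieldType) (V : finType).

Definition nonneg_on (D : {set V}) (g : {set V} -> R) :=
  forall A : {set V}, A \subset D -> 0 <= g A.

Definition monotone_on (D : {set V}) (g : {set V} -> R) :=
  forall A B : {set V}, A \subset D -> B \subset D -> B \subset A -> g B <= g A.

Definition supermodular_on (D : {set V}) (g : {set V} -> R) :=
  forall A B : {set V}, A \subset D -> B \subset D ->
    g A + g B <= g (A :|: B) + g (A :&: B).

Definition decomposition_on (m : nat) (D : {set V}) (r : nat)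
    (g : {set V} -> R) (I : {set 'I_m})
    (W : 'I_m -> {set V}) (gs : 'I_m -> {set V} -> R) :=
  (forall i, i \in I ->
     [/\ W i \subset D, #|W i| <= r, nonneg_on (W i) (gs i)
       & supermodular_on (W i) (gs i)])%N /\
  (forall T : {set V}, T \subset D -> g T = \sum_(i in I) gs i (T :&: W i)).

Definition r_decomposition (m r : nat) (f : {set V} -> R)
    (Vs : 'I_m -> {set V}) (fs : 'I_m -> {set V} -> R) :=
  decomposition_on [set: V] r f [set: 'I_m] Vs fs.

Definition in_Fr (r : nat) (f : {set V} -> R) :=
  [/\ nonneg_on [set: V] f, monotone_on [set: V] f, supermodular_on [set: V] f
    & exists (m : nat) (Vs : 'I_m -> {set V}) (fs : 'I_m -> {set V} -> R),
        r_decomposition r f Vs fs].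

Definition I_S (m : nat) (Vs : 'I_m -> {set V}) (S : {set V}) : {set 'I_m} :=
  [set i | Vs i :&: S != set0].

Definition fiS (m : nat) (Vs : 'I_m -> {set V}) (fs : 'I_m -> {set V} -> R)
    (S : {set V}) (i : 'I_m) (T : {set V}) : R :=
  fs i ((S :|: T) :&: Vs i) - fs i (S :&: Vs i).

Definition fS (m : nat) (Vs : 'I_m -> {set V}) (fs : 'I_m -> {set V} -> R)
    (S : {set V}) (T : {set V}) : R :=
  \sum_(i in I_S Vs S) fiS Vs fs S i T.

End Defs.

(** Supermodularity, monotonicity and nonnegativity are preserved by finite
    sums and by restriction to smaller ground sets, so everything reduces to
    the pieces [f_i^S].  A nonnegative supermodular [f_i] with [f_i(∅) = 0]
    (forced by [f(∅) = 0] and nonnegativity of the pieces) is monotone, and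
    [f_i^S] is the contraction of [f_i] at [S ∩ V_i], which inherits
    supermodularity and monotonicity and vanishes at [∅].  Since
    [(S ∪ T) ∩ V_i = (S ∪ (T ∩ (V_i \ S))) ∩ V_i], the [f_i^S] decompose
    [f^S], and [V_i \ S] is strictly smaller than [V_i] for [i ∈ I_S]. *)
From mathcomp Require Import all_boot all_order all_algebra zify.
Set Implicit Arguments. Unset Strict Implicit. Unset Printing Implicit Defensive.
Import Order.TTheory GRing.Theory Num.Theory.
Local Open Scope ring_scope.

Section SetFunctions.
Variables (R : realFieldType) (V : finType).
Implicit Types (D W S A B T : {set V}) (g : {set V} -> R).

Lemma nonneg_onS D' D g : D' \subset D -> nonneg_on D g -> nonneg_on D' g.
Proof. by move=> sD'D gge0 A sAD'; apply/gge0/(subset_trans sAD'). Qed.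

Lemma monotone_onS D' D g : D' \subset D -> monotone_on D g -> monotone_on D' g.
Proof.
by move=> sD'D gmono A B sAD' sBD'; apply: gmono; apply: subset_trans sD'D.
Qed.

Lemma supermodular_onS D' D g :
  D' \subset D -> supermodular_on D g -> supermodular_on D' g.
Proof.
by move=> sD'D gsup A B sAD' sBD'; apply: gsup; apply: subset_trans sD'D.
Qed.

Section Sums.
Variables (I : Type) (P : pred I) (s : seq I) (gs : I -> {set V} -> R) (D : {set V}).
Let sum_gs T := \sum_(i <- s | P i) gs i T.

Lemma nonneg_on_sum :
  (forall i, P i -> nonneg_on D (gs i)) -> nonneg_on D sum_gs.
Proof. by move=> gsge0 A sAD; apply: sumr_ge0 => i /gsge0; apply. Qed.

Lemma monotone_on_sum :
  (forall i, P i -> monotone_on D (gs i)) -> monotone_on D sum_gs.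
Proof. by move=> gsmono A B sAD sBD sBA; apply: ler_sum => i /gsmono; apply. Qed.

Lemma supermodular_on_sum :
  (forall i, P i -> supermodular_on D (gs i)) -> supermodular_on D sum_gs.
Proof.
move=> gssup A B sAD sBD; rewrite /sum_gs -!big_split /=.
by apply: ler_sum => i /gssup; apply.
Qed.

End Sums.

Lemma supermodular_monotone_on W g :
  nonneg_on W g -> supermodular_on W g -> g set0 = 0 -> monotone_on W g.
Proof.
move=> gge0 gsup g0 A B sAW sBW sBA.
have sADW : A :\: B \subset W by apply: subset_trans (subsetDl _ _) sAW.
have := gsup B (A :\: B) sBW sADW.
have -> : B :|: A :\: B = A by rewrite setDE setUIr setUCr setIT (setUidPr sBA).
have -> : B :&: (A :\: B) = set0 by rewrite setDE setICA setICr setI0.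
by rewrite g0 addr0; apply: le_trans; rewrite lerDl gge0.
Qed.

Lemma decomposition_on_piece0 m D r g (I : {set 'I_m}) Ws gs i :
  decomposition_on D r g I Ws gs -> g set0 = 0 -> i \in I -> gs i set0 = 0.
Proof.
move=> [pieces gE] g0 iI; have := gE set0 (sub0set D).
under eq_bigr do rewrite set0I.
rewrite g0 => /esym/psumr_eq0P; apply=> // j jI.
by have [_ _ gsj_ge0 _] := pieces j jI; apply: gsj_ge0; rewrite sub0set.
Qed.

Definition contraction g W S T := g ((S :|: T) :&: W) - g (S :&: W).

Lemma contraction0 g W S : contraction g W S set0 = 0.
Proof. by rewrite /contraction setU0 subrr. Qed.

Lemma contraction_restrict g W S T :
  contraction g W S T = contraction g W S (T :&: (W :\: S)).
Proof.
congr (g _ - _); apply/setP=> x; rewrite !inE.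
by case: (x \in S); case: (x \in T); case: (x \in W).
Qed.

Lemma contraction_monotone g W S :
  monotone_on W g -> monotone_on [set: V] (contraction g W S).
Proof.
move=> gmono A B _ _ sBA; rewrite lerD2r.
by apply: gmono; rewrite ?subsetIr // setSI // setUS.
Qed.

Lemma contraction_nonneg g W S :
  monotone_on W g -> nonneg_on [set: V] (contraction g W S).
Proof.
move=> gmono A _; rewrite -(contraction0 g W S).
by apply: contraction_monotone; rewrite ?subsetT ?sub0set.
Qed.

Lemma contraction_supermodular g W S :
  supermodular_on W g -> supermodular_on [set: V] (contraction g W S).
Proof.
move=> gsup A B _ _; rewrite /contraction addrACA [leRHS]addrACA lerD2r.
have := gsup ((S :|: A) :&: W) ((S :|: B) :&: W) (subsetIr _ _) (subsetIr _ _).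
by rewrite -setIUl -setUUr setIACA setIid -setUIr.
Qed.

Lemma card_setD_le_pred W S r :
  (#|W| <= r)%N -> W :&: S != set0 -> (#|W :\: S| <= r.-1)%N.
Proof.
move=> cardW /set0Pn/card_gt0P cardWS; rewrite cardsD.
have : (#|W :&: S| <= #|W|)%N by rewrite subset_leq_card ?subsetIl.
lia.
Qed.

End SetFunctions.

Theorem lemma3 (R : realFieldType) (V : finType) (r m : nat)
    (f : {set V} -> R) (Vs : 'I_m -> {set V}) (fs : 'I_m -> {set V} -> R)
    (S : {set V}) :
  in_Fr r f ->
  r_decomposition r f Vs fs ->
  f set0 = 0 ->
  S != set0 ->
  [/\ nonneg_on (~: S) (fS Vs fs S),
      monotone_on (~: S) (fS Vs fs S),
      supermodular_on (~: S) (fS Vs fs S),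
      decomposition_on (~: S) r.-1 (fS Vs fs S) (I_S Vs S)
        (fun i => Vs i :\: S) (fiS Vs fs S)
    & forall i, i \in I_S Vs S ->
        [/\ nonneg_on (Vs i :\: S) (fiS Vs fs S i),
            monotone_on (Vs i :\: S) (fiS Vs fs S i)
          & supermodular_on (Vs i :\: S) (fiS Vs fs S i)]].
Proof.
move=> _ fdec f0 _; have [pieces _] := fdec.
have fs_mono i : monotone_on (Vs i) (fs i).
  have [_ _ fsi_ge0 fsi_sup] := pieces i (in_setT i).
  exact: supermodular_monotone_on fsi_ge0 fsi_sup
    (decomposition_on_piece0 fdec f0 (in_setT i)).
have fiS_nonneg i : nonneg_on [set: V] (fiS Vs fs S i).
  exact: contraction_nonneg.
have fiS_mono i : monotone_on [set: V] (fiS Vs fs S i).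
  exact: contraction_monotone.
have fiS_sup i : supermodular_on [set: V] (fiS Vs fs S i).
  by have [_ _ _ fsi_sup] := pieces i (in_setT i); apply: contraction_supermodular.
split.
- by apply: nonneg_on_sum => i _; apply: nonneg_onS (fiS_nonneg i).
- by apply: monotone_on_sum => i _; apply: monotone_onS (fiS_mono i).
- by apply: supermodular_on_sum => i _; apply: supermodular_onS (fiS_sup i).
- split=> [i|T _]; last by apply: eq_bigr => i _; apply: contraction_restrict.
  rewrite inE => ViS; have [_ cardVi _ _] := pieces i (in_setT i).
  split; rewrite ?subsetDr ?card_setD_le_pred //.
    exact: nonneg_onS (fiS_nonneg i).
  exact: supermodular_onS (fiS_sup i).
- by move=> i _; split; [apply: nonneg_onS (fiS_nonneg i)
    | apply: monotone_onS (fiS_mono i) | apply: supermodular_onS (fiS_sup i)].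
Qed.
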